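(* Let $\mathfrak g$ be a Leibniz algebra, $U=U(\mathfrak g_{Lie})$ the (unital) universal enveloping algebra of $\mathfrak g_{Lie}$, and $x\mapsto\bar x$ the canonical map $\mathfrak g\to\mathfrak g_{Lie}\subset U$. Then $M:=U\otimes\mathfrak g$ is a $U$-bimodule, with left action by multiplication on the left factor and right action determined by $(\omega\otimes x)\cdot\bar y=\omega\otimes[x,y]+\omega\bar y\otimes x$ ($\omega\in U$, $x,y\in\mathfrak g$); the map $f:M\to U$, $f(\omega\otimes x)=\omega\bar x$, is a $U$-bimodule map; and $M$ with the products $m\dashv m'=m\cdot f(m')$, $m\vdash m'=f(m)\cdot m'$ is a dialgebra. Moreover there is an isomorphism of dialgebras $Ud(\mathfrak g)\cong U(\mathfrak g_{Lie})\otimes\mathfrak g$ sending the class of $\omega\otimes x\otimes 1$ ($\omega\in T(\mathfrak g)$, $x\in\mathfrak g$) to $\bar\omega\otimes x$, where $\bar\omega$ is the image of $\omega$ in $U$.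
   Context: A (right) Leibniz algebra is a vector space $\mathfrak g$ with bracket satisfying $[x,[y,z]]=[[x,y],z]-[[x,z],y]$; $\mathfrak g_{Lie}$ is its quotient by the ideal generated by all $[x,x]$. A dialgebra is a vector space with bilinear $\dashv,\vdash$ satisfying $(x\dashv y)\dashv z=x\dashv(y\vdash z)=x\dashv(y\dashv z)$, $(x\vdash y)\dashv z=x\vdash(y\dashv z)$, $(x\dashv y)\vdash z=x\vdash(y\vdash z)=(x\vdash y)\vdash z$. $Ud(\mathfrak g)$ is the quotient of the free dialgebra $T(\mathfrak g)\otimes\mathfrak g\otimes T(\mathfrak g)$ (products $(u\otimes v\otimes w)\dashv(u'\otimes v'\otimes w')=u\otimes v\otimes wu'v'w'$, $(u\otimes v\otimes w)\vdash(u'\otimes v'\otimes w')=uvwu'\otimes v'\otimes w'$) by the ideal generated by $[x,y]-x\dashv y+y\vdash x$, $x,y\in\mathfrak g$. *)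

(* Multilinear-algebra objects (tensor products, tensor
   algebra, universal enveloping algebra, quotients) are specified by their
   defining universal properties / first-isomorphism characterisation. *)
From HB Require Import structures.
From mathcomp Require Import all_boot all_order all_algebra.
Set Implicit Arguments. Unset Strict Implicit. Unset Printing Implicit Defensive.
Import GRing.Theory.
Local Open Scope ring_scope.

Section Defs.
Variable K : fieldType.

Definition lin (V W : lmodType K) (f : V -> W) :=
  forall a x y, f (a *: x + y) = a *: f x + f y.
Definition bilin (U V W : lmodType K) (b : U -> V -> W) :=
  (forall y, lin (fun x => b x y)) /\ (forall x, lin (b x)).
Definition trilin (U V W Z : lmodType K) (b : U -> V -> W -> Z) :=
  (forall y z, lin (fun x => b x y z)) /\ (forall x z, lin (fun y => b x y z))
  /\ (forall x y, lin (b x y)).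
Definition subspace (V : lmodType K) (S : V -> Prop) :=
  S 0 /\ forall a x y, S x -> S y -> S (a *: x + y).

Definition leibniz_algebra (g : lmodType K) (br : g -> g -> g) :=
  bilin br /\ forall x y z, br x (br y z) = br (br x y) z - br (br x z) y.

Definition ideal_gen (g : lmodType K) (br : g -> g -> g) (S : g -> Prop) (x : g) :=
  forall I : g -> Prop, subspace I ->
    (forall a b, I a -> I (br a b) /\ I (br b a)) ->
    (forall s, S s -> I s) -> I x.

(* pi : g -> L is the quotient g -> g_Lie = g / <[x,x]>, brL the induced bracket *)
Definition is_Lie_quotient (g : lmodType K) (br : g -> g -> g)
    (L : lmodType K) (brL : L -> L -> L) (pi : g -> L) :=
  lin pi /\ (forall y, exists x, pi x = y) /\
  (forall x y, pi (br x y) = brL (pi x) (pi y)) /\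
  (forall x, pi x = 0 <-> ideal_gen br (fun s => exists z, s = br z z) x).

Definition alg_hom (A B : algType K) (f : A -> B) :=
  lin f /\ f 1 = 1 /\ forall x y, f (x * y) = f x * f y.

Definition lie_map (L : lmodType K) (brL : L -> L -> L) (A : algType K) (phi : L -> A) :=
  lin phi /\ forall a b, phi (brL a b) = phi a * phi b - phi b * phi a.

Definition is_UEA (L : lmodType K) (brL : L -> L -> L) (U : algType K) (j : L -> U) :=
  lie_map brL j /\
  forall (A : algType K) (phi : L -> A), lie_map brL phi ->
    exists Phi : U -> A, alg_hom Phi /\ (forall a, Phi (j a) = phi a) /\
      forall Psi : U -> A, alg_hom Psi -> (forall a, Psi (j a) = phi a) ->
        forall u, Psi u = Phi u.

Definition is_tensor_alg (g : lmodType K) (T : algType K) (tau : g -> T) :=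
  lin tau /\
  forall (A : algType K) (phi : g -> A), lin phi ->
    exists Phi : T -> A, alg_hom Phi /\ (forall a, Phi (tau a) = phi a) /\
      forall Psi : T -> A, alg_hom Psi -> (forall a, Psi (tau a) = phi a) ->
        forall u, Psi u = Phi u.

Definition is_tensor2 (V W P : lmodType K) (t : V -> W -> P) :=
  bilin t /\
  forall (Z : lmodType K) (b : V -> W -> Z), bilin b ->
    exists h : P -> Z, lin h /\ (forall v w, h (t v w) = b v w) /\
      forall h' : P -> Z, lin h' -> (forall v w, h' (t v w) = b v w) ->
        forall p, h' p = h p.

Definition is_tensor3 (V1 V2 V3 P : lmodType K) (t : V1 -> V2 -> V3 -> P) :=
  trilin t /\
  forall (Z : lmodType K) (b : V1 -> V2 -> V3 -> Z), trilin b ->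
    exists h : P -> Z, lin h /\ (forall u v w, h (t u v w) = b u v w) /\
      forall h' : P -> Z, lin h' -> (forall u v w, h' (t u v w) = b u v w) ->
        forall p, h' p = h p.

(* dialgebras: dl = "-|", dr = "|-" *)
Definition dialgebra (D : lmodType K) (dl dr : D -> D -> D) :=
  bilin dl /\ bilin dr /\
  forall x y z,
    [/\ dl (dl x y) z = dl x (dr y z), dl x (dr y z) = dl x (dl y z),
        dl (dr x y) z = dr x (dl y z),
        dr (dl x y) z = dr x (dr y z) & dr x (dr y z) = dr (dr x y) z].

Definition dialg_hom (D E : lmodType K) (dlD drD : D -> D -> D)
    (dlE drE : E -> E -> E) (f : D -> E) :=
  lin f /\ (forall x y, f (dlD x y) = dlE (f x) (f y)) /\
  (forall x y, f (drD x y) = drE (f x) (f y)).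

Definition dideal_gen (D : lmodType K) (dl dr : D -> D -> D) (S : D -> Prop) (d : D) :=
  forall I : D -> Prop, subspace I ->
    (forall a b, I a -> I (dl a b) /\ I (dl b a) /\ I (dr a b) /\ I (dr b a)) ->
    (forall s, S s -> I s) -> I d.

(* the free dialgebra T(g) (x) g (x) T(g): its two products *)
Definition free_dialg_products (g : lmodType K) (T : algType K) (tau : g -> T)
    (F : lmodType K) (t3 : T -> g -> T -> F) (fdl fdr : F -> F -> F) :=
  bilin fdl /\ bilin fdr /\
  (forall u v w u' v' w',
      fdl (t3 u v w) (t3 u' v' w') = t3 u v (w * u' * tau v' * w')) /\
  (forall u v w u' v' w',
      fdr (t3 u v w) (t3 u' v' w') = t3 (u * tau v * w * u') v' w').

(* (Q, qdl, qdr) with q : F -> Q is the quotient Ud(g) of the free dialgebra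
   by the ideal generated by [x,y] - x -| y + y |- x *)
Definition is_Ud_quotient (g : lmodType K) (br : g -> g -> g) (T : algType K)
    (F : lmodType K) (t3 : T -> g -> T -> F) (fdl fdr : F -> F -> F)
    (Q : lmodType K) (qdl qdr : Q -> Q -> Q) (q : F -> Q) :=
  dialgebra qdl qdr /\ dialg_hom fdl fdr qdl qdr q /\
  (forall y, exists x, q x = y) /\
  (forall d, q d = 0 <->
     dideal_gen fdl fdr
       (fun s => exists x y : g, s = t3 1 (br x y) 1 - fdl (t3 1 x 1) (t3 1 y 1)
                                     + fdr (t3 1 y 1) (t3 1 x 1)) d).

Definition bimodule (U : algType K) (M : lmodType K) (l : U -> M -> M) (r : M -> U -> M) :=
  bilin l /\ bilin r /\
  (forall m, l 1 m = m) /\ (forall u v m, l (u * v) m = l u (l v m)) /\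
  (forall m, r m 1 = m) /\ (forall m u v, r m (u * v) = r (r m u) v) /\
  (forall u m v, l u (r m v) = r (l u m) v).

Definition bimodule_map (U : algType K) (M : lmodType K) (l : U -> M -> M) (r : M -> U -> M)
    (f : M -> U) :=
  lin f /\ (forall u m, f (l u m) = u * f m) /\ (forall m u, f (r m u) = f m * u).

End Defs.

(* The operators [rho_y : w (x) x |-> w (x) [x,y] + w ybar (x) x] on
   [M = U (x) g] satisfy [rho_[y,z] = rho_z rho_y - rho_y rho_z] by the Leibniz
   identity, so [y |-> rho_y] kills the squares [[x,x]], factors through
   [g_Lie] and extends to a right action of [U]; the bimodule laws then reduce
   to identities on pure tensors and to induction over the generators of [U],
   and any bimodule map [f : M -> U] yields a dialgebra.
   The map [Ud(g) -> M] comes from [u (x) x (x) w |-> ubar.(1 (x) x).wbar], a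
   dialgebra map out of the free dialgebra that kills the defining relations.
   Its inverse sends [w (x) x] to [w.xdot], where [xdot] is the class of
   [1 (x) x (x) 1] and [U] acts on [Ud(g)] through [ybar |-> ydot |- _]: the
   relation [[x,y]dot = xdot -| ydot - ydot |- xdot] and the dialgebra axioms
   make this a Lie action, hence a [U]-action. *)

From HB Require Import structures.
From mathcomp Require Import all_boot all_order all_algebra.
From mathcomp Require Import boolp.
Set Implicit Arguments. Unset Strict Implicit. Unset Printing Implicit Defensive.
Import GRing.Theory.
Local Open Scope ring_scope.

Section LinearMaps.
Variable K : fieldType.

Section Basic.
Variables (V W : lmodType K) (f : V -> W) (Hf : lin f).

Lemma linD x y : f (x + y) = f x + f y.
Proof. by have := Hf 1 x y; rewrite !scale1r. Qed.
Lemma lin0 : f 0 = 0.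
Proof. by apply: (addrI (f 0)); rewrite -linD !addr0. Qed.
Lemma linZ a x : f (a *: x) = a *: f x.
Proof. by have := Hf a x 0; rewrite !addr0 lin0 addr0. Qed.
Lemma linN x : f (- x) = - f x.
Proof. by rewrite -scaleN1r linZ scaleN1r. Qed.
Lemma linB x y : f (x - y) = f x - f y.
Proof. by rewrite linD linN. Qed.
End Basic.

Lemma lin_id (V : lmodType K) : lin (@id V). Proof. by []. Qed.

Lemma lin_comp (V W Z : lmodType K) (h : W -> Z) (k : V -> W) :
  lin h -> lin k -> lin (fun v => h (k v)).
Proof. by move=> Hh Hk a x y; rewrite Hk Hh. Qed.

Lemma lin_lc (V W : lmodType K) (c : K) (h k : V -> W) :
  lin h -> lin k -> lin (fun v => c *: h v + k v).
Proof.
by move=> Hh Hk a x y; rewrite Hh Hk !scalerDr !scalerA mulrC addrACA.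
Qed.

Lemma lin_add (V W : lmodType K) (h k : V -> W) :
  lin h -> lin k -> lin (fun v => h v + k v).
Proof. by move=> Hh Hk a x y; rewrite Hh Hk scalerDr addrACA. Qed.

Lemma lin_sub (V W : lmodType K) (h k : V -> W) :
  lin h -> lin k -> lin (fun v => h v - k v).
Proof. by move=> Hh Hk a x y; rewrite Hh Hk scalerBr opprD addrACA. Qed.

Lemma lin_mull (A : algType K) (w : A) : lin (fun v : A => w * v).
Proof. by move=> a x y; rewrite mulrDr scalerAr. Qed.

Lemma lin_mulr (A : algType K) (w : A) : lin (fun v : A => v * w).
Proof. by move=> a x y; rewrite mulrDl scalerAl. Qed.

Lemma bilinl (A B C : lmodType K) (b : A -> B -> C) : bilin b -> forall y, lin (b^~ y).
Proof. by case. Qed.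
Lemma bilinr (A B C : lmodType K) (b : A -> B -> C) : bilin b -> forall x, lin (b x).
Proof. by case. Qed.

Lemma subspaceT (V : lmodType K) : subspace (fun _ : V => True).
Proof. by []. Qed.

Lemma subspace_ker (V W : lmodType K) (h : V -> W) : lin h -> subspace (fun v => h v = 0).
Proof. by move=> Hh; split=> [|a x y hx hy]; rewrite ?lin0 // Hh hx hy scaler0 addr0. Qed.

Lemma subspace_eq (V W : lmodType K) (I : Type) (h k : I -> V -> W) :
  (forall i, lin (h i)) -> (forall i, lin (k i)) ->
  subspace (fun v => forall i, h i v = k i v).
Proof. by move=> Hh Hk; split=> [i|a x y hx hy i]; rewrite ?lin0 // Hh Hk hx hy. Qed.

End LinearMaps.

Section EndoAlgebra.
Variables (K : fieldType) (V : lmodType K) (P : V -> Prop).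

(* The extra scalar component makes the algebra nontrivial even when V = 0,
   as required of an algType; it plays no other role.  With [rev = true] the
   multiplication is reversed, so that algebra maps into it are right actions. *)
Record endo_rec := Endo {
  endo_fun :> V -> V;
  endo_scalar : K;
  endo_spec : lin endo_fun /\ forall v, P v -> P (endo_fun v) }.

Arguments Endo : clear implicits.

Definition endo of bool & subspace P := endo_rec.

Variables (rev : bool) (HP : subspace P).
Local Notation E := (endo rev HP).

Lemma endo_lin (e : E) : lin e. Proof. exact: proj1 (endo_spec e). Qed.
Lemma endo_stable (e : E) v : P v -> P (e v). Proof. exact: (proj2 (endo_spec e) v). Qed.

Lemma endo_ext (e e' : E) : (forall v, e v = e' v) -> endo_scalar e = endo_scalar e' -> e = e'.
Proof.
case: e e' => h c p [h' c' p'] /= /funext Eh ->; move: p; rewrite Eh => p.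
by congr Endo; exact: Prop_irrelevance.
Qed.

HB.instance Definition _ := gen_eqMixin E.
HB.instance Definition _ := gen_choiceMixin E.

Definition endo0 : E.
Proof.
refine (Endo (fun _ => 0) 0 (conj (fun a x y => _) (fun _ _ => _))).
  by rewrite scaler0 addr0.
exact: proj1 HP.
Defined.

Definition endo_lc (c : K) (e e' : E) : E.
Proof.
refine (Endo (fun v => c *: e v + e' v) (c * endo_scalar e + endo_scalar e')
          (conj (lin_lc c (endo_lin e) (endo_lin e')) (fun v Pv => _))).
by apply: (proj2 HP); apply: endo_stable.
Defined.

Definition endo1 : E := Endo id 1 (conj (@lin_id K V) (fun _ => id)).

Definition endo_comp (e e' : E) : E :=
  Endo (fun v => e (e' v)) (endo_scalar e * endo_scalar e')
    (conj (lin_comp (endo_lin e) (endo_lin e'))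
          (fun v Pv => endo_stable e (endo_stable e' Pv))).

Definition endo_mul (e e' : E) : E := if rev then endo_comp e' e else endo_comp e e'.

Let endo_add e e' := endo_lc 1 e e'.
Let endo_opp e := endo_lc (-1) e endo0.

Ltac endo_eq := move=> *; rewrite /endo_mul; try case: rev; apply: endo_ext => /= *;
  rewrite ?scale1r ?scaleN1r ?mul1r ?mulr1 ?mulN1r ?mulr0 ?addr0 ?add0r; try done.

Lemma endo_addA : associative endo_add. Proof. by endo_eq; rewrite ?addrA. Qed.
Lemma endo_addC : commutative endo_add. Proof. by endo_eq; rewrite addrC. Qed.
Lemma endo_add0 : left_id endo0 endo_add. Proof. by endo_eq. Qed.
Lemma endo_addN : left_inverse endo0 endo_opp endo_add. Proof. by endo_eq; rewrite ?addNr. Qed.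
Lemma endo_mulA : associative endo_mul. Proof. by endo_eq; rewrite ?mulrA. Qed.
Lemma endo_mul1 : left_id endo1 endo_mul. Proof. by endo_eq. Qed.
Lemma endo_mulr1 : right_id endo1 endo_mul. Proof. by endo_eq. Qed.
Lemma endo_mulDl : left_distributive endo_mul endo_add.
Proof. by move=> e e' f; endo_eq; rewrite ?mulrDl ?mulrDr ?(linD (endo_lin f)). Qed.
Lemma endo_mulDr : right_distributive endo_mul endo_add.
Proof. by move=> e *; endo_eq; rewrite ?mulrDl ?mulrDr ?(linD (endo_lin e)). Qed.
Lemma endo1_neq0 : endo1 != endo0.
Proof. by apply/eqP => /(congr1 endo_scalar) /= /eqP; rewrite oner_eq0. Qed.

HB.instance Definition _ := GRing.isNzRing.Build E endo_addA endo_addC endo_add0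
  endo_addN endo_mulA endo_mul1 endo_mulr1 endo_mulDl endo_mulDr endo1_neq0.

Let endo_scale c e := endo_lc c e endo0.

Lemma endo_scaleA a b e : endo_scale a (endo_scale b e) = endo_scale (a * b) e.
Proof. by endo_eq; rewrite ?scalerA ?mulrA. Qed.
Lemma endo_scale1 : left_id 1 endo_scale. Proof. by endo_eq. Qed.
Lemma endo_scaleDr : right_distributive endo_scale +%R.
Proof. by endo_eq; rewrite ?scalerDr ?mulrDr. Qed.
Lemma endo_scaleDl e : {morph endo_scale^~ e : a b / a + b}.
Proof. by endo_eq; rewrite ?scalerDl ?mulrDl. Qed.

HB.instance Definition _ :=
  GRing.Zmodule_isLmodule.Build K E endo_scaleA endo_scale1 endo_scaleDr endo_scaleDl.

Lemma endo_scaleAl a (e e' : E) : a *: (e * e') = (a *: e) * e'.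
Proof.
rewrite /GRing.mul /= /endo_mul; case: rev; apply: endo_ext => /= *;
  rewrite ?addr0 ?mulr0 ?addr0 ?(linZ (endo_lin e')) //;
  first [exact: mulrA | exact: mulrCA].
Qed.
Lemma endo_scaleAr a (e e' : E) : a *: (e * e') = e * (a *: e').
Proof.
rewrite /GRing.mul /= /endo_mul; case: rev; apply: endo_ext => /= *;
  rewrite ?addr0 ?mulr0 ?addr0 ?(linZ (endo_lin e)) //;
  first [exact: mulrA | exact: mulrCA].
Qed.

HB.instance Definition _ := GRing.Lmodule_isLalgebra.Build K E endo_scaleAl.
HB.instance Definition _ := GRing.Lalgebra_isAlgebra.Build K E endo_scaleAr.

Lemma endo_lcE c (e e' : E) v : (c *: e + e') v = c *: e v + e' v.
Proof. by rewrite /= scale1r addr0. Qed.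
Lemma endo_subE (e e' : E) v : (e - e') v = e v - e' v.
Proof. by rewrite /= scale1r addr0 scaleN1r. Qed.
Lemma endo_mulE (e e' : E) v : (e * e') v = if rev then e' (e v) else e (e' v).
Proof. by rewrite /GRing.mul /= /endo_mul; case: rev. Qed.
Lemma endo_scalarM (e e' : E) : endo_scalar (e * e') = endo_scalar e * endo_scalar e'.
Proof.
change (endo_scalar (endo_mul e e') = endo_scalar e * endo_scalar e').
by rewrite /endo_mul; case: rev; rewrite //= mulrC.
Qed.

End EndoAlgebra.

Arguments Endo {K V P}.

Notation End V := (endo false (subspaceT V)).

Section UniversalInduction.
Variables (K : fieldType) (L : lmodType K) (U : algType K) (j : L -> U).

Definition alg_universal (C : forall A : algType K, (L -> A) -> Prop) :=
  forall (A : algType K) (phi : L -> A), C A phi ->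
    exists Phi : U -> A, alg_hom Phi /\ (forall a, Phi (j a) = phi a) /\
      forall Psi : U -> A, alg_hom Psi -> (forall a, Psi (j a) = phi a) ->
        forall u, Psi u = Phi u.

Definition lmul_endo (P : U -> Prop) (HP : subspace P) (u : U)
    (Hu : forall v, P v -> P (u * v)) (c : K) : endo false HP :=
  Endo (fun v => u * v) c (conj (lin_mull u) Hu).

Lemma alg_universal_ind (C : forall A : algType K, (L -> A) -> Prop) :
  alg_universal C ->
  (forall P (HP : subspace P) (Hj : forall a v, P v -> P (j a * v)),
     C (endo false HP) (fun a => lmul_endo HP (Hj a) 0)) ->
  forall P : U -> Prop, subspace P -> P 1 ->
    (forall a u, P u -> P (j a * u)) -> forall u, P u.
Proof.
move=> Huniv HC P HP P1 Pj u.
have [Phi [[PhiL [Phi1 PhiM]] [Phij _]]] := Huniv _ _ (HC P HP Pj).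
have [PhiT [_ [_ PhiT_uniq]]] := Huniv _ _ (HC _ (subspaceT U) (fun _ _ _ => I)).
pose incl (e : endo false HP) : End U := Endo e (endo_scalar e) (conj (endo_lin e) (fun _ _ => I)).
pose lmul (w : U) : End U :=
  lmul_endo (subspaceT U) (u := w) (fun _ _ => I) (endo_scalar (Phi w)).
have incl_hom : alg_hom (fun w => incl (Phi w)).
  split; [|split] => [c x y|| x y]; apply: endo_ext => [v|] //=;
    by rewrite ?PhiL ?Phi1 ?PhiM.
have lmul_hom : alg_hom lmul.
  split; [|split] => [c x y|| x y]; apply: endo_ext => [v|] /=;
    rewrite ?PhiL ?Phi1 ?PhiM /= ?scale1r ?addr0 ?mulr1 ?mul1r //.
  - by rewrite mulrDl scalerAl.
  - by rewrite mulrA.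
have Phi_gen a : incl (Phi (j a)) = lmul_endo (subspaceT U) (u := j a) (fun _ _ => I) 0.
  by apply: endo_ext => [v|] /=; rewrite ?Phij.
have lmul_gen a : lmul (j a) = lmul_endo (subspaceT U) (u := j a) (fun _ _ => I) 0.
  by apply: endo_ext => [v|] /=; rewrite ?Phij.
(* By uniqueness in [End U], [Phi u] is left multiplication by [u], so
   [u = Phi u 1] lies in [P]. *)
have /(congr1 (fun e : End U => e 1)) : incl (Phi u) = lmul u.
  by rewrite (PhiT_uniq _ incl_hom Phi_gen) (PhiT_uniq _ lmul_hom lmul_gen).
rewrite /= mulr1 => <-; exact: endo_stable.
Qed.

Section GeneratorInstances.
Variables (P : U -> Prop) (HP : subspace P) (Hj : forall a v, P v -> P (j a * v)).

Lemma lmul_endo_lin : lin j -> lin (fun a => lmul_endo HP (Hj a) 0).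
Proof.
move=> jL c a b; apply: endo_ext => [v|] /=; last by rewrite !(mulr0, addr0).
by rewrite scale1r addr0 jL mulrDl -scalerAl.
Qed.

Lemma lmul_endo_lie (brL : L -> L -> L) :
  lie_map brL j -> lie_map brL (fun a => lmul_endo HP (Hj a) 0).
Proof.
case=> jL jB; split; first exact: lmul_endo_lin.
move=> a b; apply: endo_ext => [v|]; last by rewrite /= !(mulr0, addr0, oppr0).
by rewrite endo_subE !endo_mulE /= jB mulrBl !mulrA.
Qed.

End GeneratorInstances.

Lemma uea_ind (brL : L -> L -> L) : is_UEA brL j ->
  forall P : U -> Prop, subspace P -> P 1 ->
    (forall a u, P u -> P (j a * u)) -> forall u, P u.
Proof.
case=> jLie Huniv; apply: (alg_universal_ind Huniv) => P HP Hj.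
exact: lmul_endo_lie.
Qed.

Lemma tensor_alg_ind : is_tensor_alg j ->
  forall P : U -> Prop, subspace P -> P 1 ->
    (forall a u, P u -> P (j a * u)) -> forall u, P u.
Proof.
case=> jL Huniv; apply: (alg_universal_ind Huniv) => P HP Hj.
exact: lmul_endo_lin.
Qed.

End UniversalInduction.

Section TensorsAndQuotients.
Variable K : fieldType.

Section Tensor2.
Variables (V W P : lmodType K) (t : V -> W -> P) (Ht : is_tensor2 t).

Lemma tensor2_lift (Z : lmodType K) (b : V -> W -> Z) :
  bilin b -> exists h : P -> Z, lin h /\ forall v w, h (t v w) = b v w.
Proof. by case: Ht => _ /(_ Z b) Huniv /Huniv [h [hL [ht _]]]; exists h. Qed.

Lemma tensor2_ext (Z : lmodType K) (h h' : P -> Z) : lin h -> lin h' ->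
  (forall v w, h (t v w) = h' (t v w)) -> forall p, h p = h' p.
Proof.
move=> hL h'L E p; case: Ht => [[tl tr] Huniv].
have hb : bilin (fun v w => h (t v w)) by split=> [y|x] a u u'; rewrite ?tl ?tr hL.
have [k [_ [_ k_uniq]]] := Huniv Z _ hb.
by rewrite (k_uniq h hL (fun _ _ => erefl)) (k_uniq h' h'L (fun v w => esym (E v w))).
Qed.

End Tensor2.

Section Tensor3.
Variables (V1 V2 V3 P : lmodType K) (t : V1 -> V2 -> V3 -> P) (Ht : is_tensor3 t).

Lemma tensor3_lift (Z : lmodType K) (b : V1 -> V2 -> V3 -> Z) :
  trilin b -> exists h : P -> Z, lin h /\ forall u v w, h (t u v w) = b u v w.
Proof. by case: Ht => _ /(_ Z b) Huniv /Huniv [h [hL [ht _]]]; exists h. Qed.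

Lemma tensor3_ext (Z : lmodType K) (h h' : P -> Z) : lin h -> lin h' ->
  (forall u v w, h (t u v w) = h' (t u v w)) -> forall p, h p = h' p.
Proof.
move=> hL h'L E p; case: Ht => [[ta [tb tc]] Huniv].
have hb : trilin (fun u v w => h (t u v w)).
  by split=> [y z|]; [|split=> [x z|x y]] => a u u'; rewrite ?ta ?tb ?tc hL.
have [k [_ [_ k_uniq]]] := Huniv Z _ hb.
by rewrite (k_uniq h hL (fun _ _ _ => erefl)) (k_uniq h' h'L (fun u v w => esym (E u v w))).
Qed.

End Tensor3.

Lemma lin_factor (F Q W : lmodType K) (q : F -> Q) (psi : F -> W) :
  lin q -> (forall e, exists X, q X = e) -> lin psi ->
  (forall X, q X = 0 -> psi X = 0) ->
  exists phi : Q -> W, lin phi /\ forall X, phi (q X) = psi X.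
Proof.
move=> qL q_surj psiL psi_ker.
have psi_q X Y : q X = q Y -> psi X = psi Y.
  move=> EXY; apply/eqP; rewrite -subr_eq0 -(linB psiL) psi_ker //.
  by rewrite (linB qL) EXY subrr.
have [s sK] := choice q_surj.
exists (fun e => psi (s e)); split=> [a e e'|X]; last by apply: psi_q; rewrite sK.
by rewrite -psiL; apply: psi_q; rewrite qL !sK.
Qed.

End TensorsAndQuotients.

Record left_action (K : fieldType) (U : algType K) (V : lmodType K)
    (act : U -> V -> V) : Prop := LeftAction {
  lact_lin : forall u, lin (act u);
  lact_linl : forall m, lin (act^~ m);
  lact1 : forall m, act 1 m = m;
  lactM : forall u v m, act (u * v) m = act u (act v m) }.

Record right_action (K : fieldType) (U : algType K) (V : lmodType K)
    (act : V -> U -> V) : Prop := RightAction {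
  ract_lin : forall u, lin (act^~ u);
  ract_linr : forall m, lin (act m);
  ract1 : forall m, act m 1 = m;
  ractM : forall m u v, act m (u * v) = act (act m u) v }.

Section EnvelopingAlgebra.
Variables (K : fieldType) (g : lmodType K) (br : g -> g -> g)
  (L : lmodType K) (brL : L -> L -> L) (pi : g -> L) (HL : is_Lie_quotient br brL pi)
  (U : algType K) (j : L -> U) (HU : is_UEA brL j).
Local Notation jp y := (j (pi y)).

Lemma lie_factor (A : algType K) (rho : g -> A) :
  lie_map br rho -> exists Phi : U -> A, alg_hom Phi /\ forall y, Phi (jp y) = rho y.
Proof.
case=> rhoL rhoB; case: HL => piL [pi_surj [piB pi_ker]].
have rho_ker x : pi x = 0 -> rho x = 0.
  move/pi_ker/(_ _ (subspace_ker rhoL)); apply.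
  - by move=> a b Ha; rewrite !rhoB Ha mul0r mulr0 subrr.
  - by move=> s [z ->]; rewrite rhoB subrr.
have rho_pi x y : pi x = pi y -> rho x = rho y.
  move=> Exy; apply/eqP; rewrite -subr_eq0 -(linB rhoL) rho_ker //.
  by rewrite (linB piL) Exy subrr.
have [s sK] := choice pi_surj.
have rho_s : lie_map brL (fun a => rho (s a)).
  by split=> [c a b|a b]; rewrite -?rhoL -?rhoB; apply: rho_pi; rewrite ?piL ?piB !sK.
case: HU => _ /(_ _ _ rho_s) [Phi [PhiH [Phij _]]].
by exists Phi; split=> // y; rewrite Phij; apply: rho_pi; rewrite sK.
Qed.

Lemma enveloping_ind (P : U -> Prop) : subspace P -> P 1 ->
  (forall y u, P u -> P (jp y * u)) -> forall u, P u.
Proof.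
move=> HP P1 Pj; apply: (uea_ind HU HP P1) => a u.
by case: HL => _ [/(_ a) [y <-] _]; exact: Pj.
Qed.

Section Actions.
Variables (V : lmodType K) (act : g -> V -> V).
Hypotheses (act_lin : forall y, lin (act y)) (act_linl : forall m, lin (act^~ m)).

Definition act_endo rev y : endo rev (subspaceT V) :=
  Endo (act y) 0 (conj (act_lin y) (fun _ _ => I)).

Lemma act_endo_lie rev :
  (forall y z m, act (br y z) m =
     (act_endo rev y * act_endo rev z) m - (act_endo rev z * act_endo rev y) m) ->
  lie_map br (act_endo rev).
Proof.
move=> actB; split=> [c y z|y z]; apply: endo_ext => [m|];
  rewrite ?endo_lcE ?endo_subE ?actB //=; first exact: act_linl.
- by rewrite !(mulr0, addr0).
- by rewrite !endo_scalarM /= !(mulr0, addr0, oppr0).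
Qed.

Lemma exists_left_action :
  (forall y z m, act (br y z) m = act y (act z m) - act z (act y m)) ->
  exists lact : U -> V -> V, left_action lact /\ forall y m, lact (jp y) m = act y m.
Proof.
move=> actB.
have [|Phi [[PhiL [Phi1 PhiM]] Phij]] := lie_factor (act_endo_lie (rev := false) _).
  by move=> y z m; rewrite !endo_mulE.
exists (fun u => endo_fun (Phi u)); split; first split=> [u|m c u v|m|u v m].
- exact: endo_lin.
- by rewrite PhiL endo_lcE.
- by rewrite Phi1.
- by rewrite PhiM endo_mulE.
by move=> y m; rewrite Phij.
Qed.

Lemma exists_right_action :
  (forall y z m, act (br y z) m = act z (act y m) - act y (act z m)) ->
  exists ract : V -> U -> V, right_action ract /\ forall y m, ract m (jp y) = act y m.
Proof.
move=> actB.
have [|Phi [[PhiL [Phi1 PhiM]] Phij]] := lie_factor (act_endo_lie (rev := true) _).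
  by move=> y z m; rewrite !endo_mulE.
exists (fun m u => endo_fun (Phi u) m); split; first split=> [u|m c u v|m|m u v].
- exact: endo_lin.
- by rewrite PhiL endo_lcE.
- by rewrite Phi1.
- by rewrite PhiM endo_mulE.
by move=> y m; rewrite Phij.
Qed.

End Actions.
End EnvelopingAlgebra.

Section Dialgebras.
Variable K : fieldType.

Lemma dialgebra_dr_bracket (D : lmodType K) (dl dr : D -> D -> D) :
  dialgebra dl dr -> forall a b m, dr (dl a b - dr b a) m = dr a (dr b m) - dr b (dr a m).
Proof.
case=> _ [[drL _] ax] a b m; rewrite (linB (drL m)).
by case: (ax a b m) => _ _ _ -> _; case: (ax b a m) => _ _ _ _ <-.
Qed.

Lemma dialgebra_dl_bracket (D : lmodType K) (dl dr : D -> D -> D) :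
  dialgebra dl dr -> forall a b m, dl m (dl a b - dr b a) = dl (dl m a) b - dl (dl m b) a.
Proof.
case=> [[_ dlR] [_ ax]] a b m; rewrite (linB (dlR m)).
by case: (ax m a b) => <- <- _ _ _; case: (ax m b a) => <- _ _ _ _.
Qed.

Lemma dialg_hom_dideal (D E : lmodType K) (dlD drD : D -> D -> D)
    (dlE drE : E -> E -> E) (h : D -> E) (S : D -> Prop) :
  dialg_hom dlD drD dlE drE h -> bilin dlE -> bilin drE ->
  (forall s, S s -> h s = 0) -> forall d, dideal_gen dlD drD S d -> h d = 0.
Proof.
move=> [hL [hl hr]] [dlEl dlEr] [drEl drEr] hS d /(_ _ (subspace_ker hL)); apply=> //.
move=> a b ha; rewrite hl hl hr hr ha.
by do !split; [exact: (lin0 (dlEl _)) | exact: (lin0 (dlEr _))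
              | exact: (lin0 (drEl _)) | exact: (lin0 (drEr _))].
Qed.

Lemma bimodule_map_dialgebra (U : algType K) (M : lmodType K)
    (l : U -> M -> M) (r : M -> U -> M) (f : M -> U) :
  bimodule l r -> bimodule_map l r f ->
  dialgebra (fun m m' => r m (f m')) (fun m m' => l (f m) m').
Proof.
move=> [[lL lR] [[rL rR] [l1 [lM [r1 [rM lr]]]]]] [fL [fl fr]].
split; [|split]; first by split=> [m'|m]; [exact: rL | exact: lin_comp].
  by split=> [m'|m]; [exact: (lin_comp (lL m')) | exact: lR].
by move=> x y z; split; rewrite ?fl ?fr ?rM ?lM ?lr.
Qed.

End Dialgebras.

Lemma subr_cross_cancel (V : zmodType) (a a' b c d d' : V) :
  (a + b) + (c + d) - ((a' + c) + (b + d')) = (a - a') + (d - d').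
Proof.
rewrite !opprD !addrA [LHS](ACl (1*5*4*8*3*6*2*7)).
by rewrite /= !addrK.
Qed.

Section LeibnizBimodule.
Variables (K : fieldType) (g : lmodType K) (br : g -> g -> g) (Hg : leibniz_algebra br)
  (L : lmodType K) (brL : L -> L -> L) (pi : g -> L) (HL : is_Lie_quotient br brL pi)
  (U : algType K) (j : L -> U) (HU : is_UEA brL j)
  (M : lmodType K) (t : U -> g -> M) (HM : is_tensor2 t).
Local Notation jp y := (j (pi y)).

Let jpL : lin (fun y => jp y).
Proof. by case: HU => [[jL _] _]; case: HL => piL _; exact: lin_comp. Qed.
Let jpB x y : jp (br x y) = jp x * jp y - jp y * jp x.
Proof. by case: HU => [[_ <-] _]; case: HL => _ [_ [->]]. Qed.
Let brL_lin : bilin br. Proof. by case: Hg. Qed.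
Let t_linl x : lin (t^~ x). Proof. by case: HM => [[]]. Qed.
Let t_linr w : lin (t w). Proof. by case: HM => [[]]. Qed.
Let ext := tensor2_ext HM.

Lemma exists_left_mult : exists l : U -> M -> M,
  forall u, lin (l u) /\ forall w x, l u (t w x) = t (u * w) x.
Proof.
suff /choice[l Hl] u : exists h : M -> M, lin h /\ forall w x, h (t w x) = t (u * w) x
  by exists l.
apply: (tensor2_lift HM); split=> [x|w]; last exact: t_linr.
exact: (lin_comp (t_linl x) (lin_mull u)).
Qed.

Lemma exists_mult_map : exists f : M -> U, lin f /\ forall w x, f (t w x) = w * jp x.
Proof.
apply: (tensor2_lift HM); split=> [x|w]; first exact: lin_mulr.
exact: (lin_comp (lin_mull w) jpL).
Qed.

Lemma exists_gen_action : exists rho : g -> M -> M,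
  forall y, lin (rho y) /\ forall w x, rho y (t w x) = t w (br x y) + t (w * jp y) x.
Proof.
suff /choice[rho Hrho] y : exists h : M -> M,
    lin h /\ forall w x, h (t w x) = t w (br x y) + t (w * jp y) x by exists rho.
apply: (tensor2_lift HM); split=> [x|w].
  exact: (lin_add (t_linl _) (lin_comp (t_linl x) (lin_mulr _))).
exact: (lin_add (lin_comp (t_linr w) (bilinl brL_lin y)) (t_linr _)).
Qed.

Section Actions.
Variables (l : U -> M -> M) (f : M -> U) (rho : g -> M -> M).
Hypotheses (l_lin : forall u, lin (l u)) (l_t : forall u w x, l u (t w x) = t (u * w) x)
  (f_lin : lin f) (f_t : forall w x, f (t w x) = w * jp x)
  (rho_lin : forall y, lin (rho y))
  (rho_t : forall y w x, rho y (t w x) = t w (br x y) + t (w * jp y) x).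

Lemma left_mult_linl m : lin (l^~ m).
Proof.
move=> a u v; apply: (ext (l_lin _) (lin_lc a (l_lin u) (l_lin v))) => w x.
by rewrite !l_t mulrDl -scalerAl (t_linl x).
Qed.

Lemma left_mult1 m : l 1 m = m.
Proof. by apply: (ext (l_lin _) (@lin_id _ _)) => w x; rewrite l_t mul1r. Qed.

Lemma left_multM u v m : l (u * v) m = l u (l v m).
Proof. by apply: (ext (l_lin _) (lin_comp (l_lin u) (l_lin v))) => w x; rewrite !l_t mulrA. Qed.

Lemma mult_map_left u m : f (l u m) = u * f m.
Proof.
apply: (ext (lin_comp f_lin (l_lin u)) (lin_comp (lin_mull u) f_lin)) => w x.
by rewrite l_t !f_t mulrA.
Qed.

Lemma gen_action_linl m : lin (rho^~ m).
Proof.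
move=> a y z; apply: (ext (rho_lin _) (lin_lc a (rho_lin y) (rho_lin z))) => w x.
rewrite !rho_t (bilinr brL_lin x) jpL mulrDr -scalerAr (t_linr w) (t_linl x).
by rewrite scalerDr addrACA.
Qed.

Lemma gen_action_br y z m : rho (br y z) m = rho z (rho y m) - rho y (rho z m).
Proof.
apply: (ext (rho_lin _) (lin_sub (lin_comp (rho_lin z) (rho_lin y))
                                 (lin_comp (rho_lin y) (rho_lin z)))) => w x.
rewrite !rho_t !(linD (rho_lin _)) !rho_t jpB; case: Hg => _ ->.
by rewrite (linB (t_linr w)) mulrBr (linB (t_linl x)) !mulrA subr_cross_cancel.
Qed.

Lemma left_mult_gen_action u y m : l u (rho y m) = rho y (l u m).
Proof.
apply: (ext (lin_comp (l_lin u) (rho_lin y)) (lin_comp (rho_lin y) (l_lin u))) => w x.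
by rewrite !rho_t (linD (l_lin u)) !l_t mulrA.
Qed.

Lemma mult_map_gen_action y m : f (rho y m) = f m * jp y.
Proof.
apply: (ext (lin_comp f_lin (rho_lin y)) (lin_comp (lin_mulr _) f_lin)) => w x.
by rewrite rho_t (linD f_lin) !f_t jpB mulrBr -!mulrA subrK.
Qed.

Section RightAction.
Variable r : M -> U -> M.
Hypotheses (Hr : right_action r) (r_jp : forall y m, r m (jp y) = rho y m).

Lemma left_right_comm u m v : l u (r m v) = r (l u m) v.
Proof.
suff comm : forall p : U * M, l p.1 (r p.2 v) = r (l p.1 p.2) v by exact: comm (u, m).
elim/(enveloping_ind HL HU): v => {u m}.
- apply: subspace_eq => [[u m]|[u m]] /=; last exact: ract_linr.
  exact: lin_comp (l_lin u) (ract_linr Hr m).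
- by move=> [u m] /=; rewrite !ract1.
- by move=> y v IH [u m] /=; rewrite !ractM // !r_jp (IH (u, _)) left_mult_gen_action.
Qed.

Lemma mult_map_right m u : f (r m u) = f m * u.
Proof.
elim/(enveloping_ind HL HU): u m.
- apply: subspace_eq => m; first exact: lin_comp f_lin (ract_linr Hr m).
  exact: lin_mull.
- by move=> m; rewrite ract1 // mulr1.
- by move=> y u IH m; rewrite ractM // IH r_jp mult_map_gen_action mulrA.
Qed.

End RightAction.
End Actions.

Lemma leibniz_bimodule : exists (l : U -> M -> M) (r : M -> U -> M) (f : M -> U),
  [/\ (forall u w x, l u (t w x) = t (u * w) x) /\
      (forall w x y, r (t w x) (jp y) = t w (br x y) + t (w * jp y) x),
      bimodule l r &
      bimodule_map l r f /\ (forall w x, f (t w x) = w * jp x)].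
Proof.
have [l Hl] := exists_left_mult; have [f [f_lin f_t]] := exists_mult_map.
have [rho Hrho] := exists_gen_action.
have rho_lin y := proj1 (Hrho y); have rho_t y := proj2 (Hrho y).
have [r [Hr r_jp]] :=
  exists_right_action HL HU rho_lin (gen_action_linl rho_lin rho_t) (gen_action_br rho_lin rho_t).
have l_lin u := proj1 (Hl u); have l_t u := proj2 (Hl u).
exists l, r, f; split.
- by split=> // w x y; rewrite r_jp rho_t.
- do !split; [exact: left_mult_linl | exact: l_lin | exact: ract_lin Hr | exact: ract_linr Hr
  | exact: left_mult1 | exact: left_multM | exact: ract1 Hr | exact: ractM Hr|].
  exact: (left_right_comm l_lin l_t rho_lin rho_t Hr r_jp).
- do !split=> //; [exact: mult_map_left | exact: (mult_map_right f_lin f_t rho_lin rho_t Hr r_jp)].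
Qed.

End LeibnizBimodule.

Section UdIsomorphism.
Variables (K : fieldType) (g : lmodType K) (br : g -> g -> g)
  (L : lmodType K) (brL : L -> L -> L) (pi : g -> L) (HL : is_Lie_quotient br brL pi)
  (U : algType K) (j : L -> U) (HU : is_UEA brL j)
  (T : algType K) (tau : g -> T) (HT : is_tensor_alg tau)
  (bar : T -> U) (Hbar : alg_hom bar) (bar_tau : forall x, bar (tau x) = j (pi x))
  (F : lmodType K) (t3 : T -> g -> T -> F) (HF : is_tensor3 t3)
  (fdl fdr : F -> F -> F) (Hfree : free_dialg_products tau t3 fdl fdr)
  (Q : lmodType K) (qdl qdr : Q -> Q -> Q) (q : F -> Q)
  (HQ : is_Ud_quotient br t3 fdl fdr qdl qdr q)
  (M : lmodType K) (t : U -> g -> M) (HM : is_tensor2 t)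
  (l : U -> M -> M) (r : M -> U -> M) (f : M -> U)
  (l_t : forall u w x, l u (t w x) = t (u * w) x)
  (r_t : forall w x y, r (t w x) (j (pi y)) = t w (br x y) + t (w * j (pi y)) x)
  (Hbim : bimodule l r) (Hf : bimodule_map l r f)
  (f_t : forall w x, f (t w x) = w * j (pi x)).
Local Notation jp y := (j (pi y)).

Let l_linl m : lin (l^~ m). Proof. by case: Hbim => [[]]. Qed.
Let l_lin u : lin (l u). Proof. by case: Hbim => [[]]. Qed.
Let r_lin u : lin (r^~ u). Proof. by case: Hbim => _ [[]]. Qed.
Let r_linr m : lin (r m). Proof. by case: Hbim => _ [[]]. Qed.
Let l1 m : l 1 m = m. Proof. by case: Hbim => _ [_ []]. Qed.
Let lM u v m : l (u * v) m = l u (l v m). Proof. by case: Hbim => _ [_ [_ []]]. Qed.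
Let r1 m : r m 1 = m. Proof. by case: Hbim => _ [_ [_ [_ []]]]. Qed.
Let rM m u v : r m (u * v) = r (r m u) v. Proof. by case: Hbim => _ [_ [_ [_ [_ []]]]]. Qed.
Let lr u m v : l u (r m v) = r (l u m) v. Proof. by case: Hbim => _ [_ [_ [_ [_ []]]]]. Qed.
Let f_lin : lin f. Proof. by case: Hf. Qed.
Let f_l u m : f (l u m) = u * f m. Proof. by case: Hf => _ []. Qed.
Let f_r m u : f (r m u) = f m * u. Proof. by case: Hf => _ []. Qed.

Let bar_lin : lin bar. Proof. by case: Hbar. Qed.
Let bar1 : bar 1 = 1. Proof. by case: Hbar => _ []. Qed.
Let barM x y : bar (x * y) = bar x * bar y. Proof. by case: Hbar => _ []. Qed.

Let t3_linl v w : lin (fun u => t3 u v w). Proof. by case: HF => [[]]. Qed.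
Let t3_linm u w : lin (fun v => t3 u v w). Proof. by case: HF => [[_ []]]. Qed.
Let t3_linr u v : lin (t3 u v). Proof. by case: HF => [[_ []]]. Qed.
Let fdl_lin : bilin fdl. Proof. by case: Hfree. Qed.
Let fdr_lin : bilin fdr. Proof. by case: Hfree => _ []. Qed.
Let fdl_t3 u v w u' v' w' : fdl (t3 u v w) (t3 u' v' w') = t3 u v (w * u' * tau v' * w').
Proof. by case: Hfree => _ [_ []]. Qed.
Let fdr_t3 u v w u' v' w' : fdr (t3 u v w) (t3 u' v' w') = t3 (u * tau v * w * u') v' w'.
Proof. by case: Hfree => _ [_ []]. Qed.

Let HQd : dialgebra qdl qdr. Proof. by case: HQ. Qed.
Let qdl_lin : bilin qdl. Proof. by case: HQd. Qed.
Let qdr_lin : bilin qdr. Proof. by case: HQd => _ []. Qed.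
Let q_lin : lin q. Proof. by case: HQ => _ [[]]. Qed.
Let q_dl X Y : q (fdl X Y) = qdl (q X) (q Y). Proof. by case: HQ => _ [[_ []]]. Qed.
Let q_dr X Y : q (fdr X Y) = qdr (q X) (q Y). Proof. by case: HQ => _ [[_ []]]. Qed.
Let q_surj e : exists X, q X = e. Proof. by case: HQ => _ [_ []]. Qed.

Let dot y := q (t3 1 y 1).

Let dot_lin : lin dot. Proof. exact: lin_comp q_lin (t3_linm 1 1). Qed.

Lemma dot_br x y : dot (br x y) = qdl (dot x) (dot y) - qdr (dot y) (dot x).
Proof.
have : q (t3 1 (br x y) 1 - fdl (t3 1 x 1) (t3 1 y 1) + fdr (t3 1 y 1) (t3 1 x 1)) = 0.
  by case: HQ => _ [_ [_ ->]] I _ _; apply; exists x, y.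
rewrite (linD q_lin) (linB q_lin) q_dl q_dr => rel.
apply: (addIr (qdr (dot y) (dot x))); rewrite subrK; apply/eqP.
by rewrite -subr_eq0 addrAC; apply/eqP.
Qed.

Lemma qdr_dot_br y z e :
  qdr (dot (br y z)) e = qdr (dot y) (qdr (dot z) e) - qdr (dot z) (qdr (dot y) e).
Proof. by rewrite dot_br (dialgebra_dr_bracket HQd). Qed.

Lemma qdl_dot_br y z e :
  qdl e (dot (br y z)) = qdl (qdl e (dot y)) (dot z) - qdl (qdl e (dot z)) (dot y).
Proof. by rewrite dot_br (dialgebra_dl_bracket HQd). Qed.

Section InducedMap.
Variable psi : F -> M.
Hypotheses (psi_lin : lin psi)
  (psi_t3 : forall u v w, psi (t3 u v w) = l (bar u) (r (t 1 v) (bar w))).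

Lemma psi_dot y : psi (t3 1 y 1) = t 1 y.
Proof. by rewrite psi_t3 bar1 r1 l1. Qed.

Lemma psi_fdl X Y : psi (fdl X Y) = r (psi X) (f (psi Y)).
Proof.
move: X; apply: (tensor3_ext HF (lin_comp psi_lin (bilinl fdl_lin Y))).
  exact: (lin_comp (r_lin _) psi_lin).
move=> u v w; move: Y; apply: (tensor3_ext HF (lin_comp psi_lin (bilinr fdl_lin _))).
  exact: lin_comp (r_linr _) (lin_comp f_lin psi_lin).
move=> u' v' w'; rewrite fdl_t3 !psi_t3 f_l f_r f_t -lr -rM !barM bar_tau.
by rewrite mul1r !mulrA.
Qed.

Lemma psi_fdr X Y : psi (fdr X Y) = l (f (psi X)) (psi Y).
Proof.
move: X; apply: (tensor3_ext HF (lin_comp psi_lin (bilinl fdr_lin Y))).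
  exact: lin_comp (l_linl _) (lin_comp f_lin psi_lin).
move=> u v w; move: Y; apply: (tensor3_ext HF (lin_comp psi_lin (bilinr fdr_lin _))).
  exact: lin_comp (l_lin _) psi_lin.
move=> u' v' w'; rewrite fdr_t3 !psi_t3 f_l f_r f_t -lM !barM bar_tau.
by rewrite mul1r !mulrA.
Qed.

Lemma psi_ker X : q X = 0 -> psi X = 0.
Proof.
have [_ [_ [_ /(_ X) [q_ker _]]]] := HQ.
move/q_ker; apply: (dialg_hom_dideal (dlE := fun m m' => r m (f m'))
                                    (drE := fun m m' => l (f m) m')).
- by split=> //; split; [exact: psi_fdl | exact: psi_fdr].
- split=> [m'|m]; [exact: r_lin | exact: lin_comp (r_linr m) f_lin].
- split=> [m'|m]; [exact: lin_comp (l_linl m') f_lin | exact: l_lin].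
move=> _ [x [y ->]]; rewrite (linD psi_lin) (linB psi_lin) psi_fdl psi_fdr !psi_dot !f_t.
by rewrite !mul1r r_t l_t mulr1 mul1r opprD addrA subrr add0r addNr.
Qed.

End InducedMap.

Section Inverse.
Variables (psi : F -> M) (phi : Q -> M) (lam : U -> Q -> Q) (rq : Q -> U -> Q) (chi : M -> Q).
Hypotheses (psi_lin : lin psi)
  (psi_t3 : forall u v w, psi (t3 u v w) = l (bar u) (r (t 1 v) (bar w)))
  (phi_lin : lin phi) (phi_q : forall X, phi (q X) = psi X)
  (Hlam : left_action lam) (lam_jp : forall y e, lam (jp y) e = qdr (dot y) e)
  (Hrq : right_action rq) (rq_jp : forall y e, rq e (jp y) = qdl e (dot y))
  (chi_lin : lin chi) (chi_t : forall w x, chi (t w x) = lam w (dot x)).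

Lemma phi_dl e e' : phi (qdl e e') = r (phi e) (f (phi e')).
Proof.
have [[X <-] [Y <-]] := (q_surj e, q_surj e').
by rewrite -q_dl !phi_q (psi_fdl psi_lin psi_t3).
Qed.

Lemma phi_dr e e' : phi (qdr e e') = l (f (phi e)) (phi e').
Proof.
have [[X <-] [Y <-]] := (q_surj e, q_surj e').
by rewrite -q_dr !phi_q (psi_fdr psi_lin psi_t3).
Qed.

Lemma phi_lam u e : phi (lam u e) = l u (phi e).
Proof.
elim/(enveloping_ind HL HU): u e => [||y u IH].
- apply: subspace_eq => e; first exact: lin_comp phi_lin (lact_linl Hlam e).
  exact: l_linl.
- by move=> e; rewrite lact1 // l1.
- move=> e; rewrite lactM // lam_jp phi_dr IH lM; congr l.
  by rewrite /dot phi_q (psi_dot psi_t3) f_t mul1r.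
Qed.

Lemma phi_chi m : phi (chi m) = m.
Proof.
apply: (tensor2_ext HM (lin_comp phi_lin chi_lin) (@lin_id _ _)) => w x.
by rewrite chi_t phi_lam /dot phi_q (psi_dot psi_t3) l_t mulr1.
Qed.

Lemma lam_qdl u e e' : lam u (qdl e e') = qdl (lam u e) e'.
Proof.
suff lam_dl (p : Q * Q) : lam u (qdl p.1 p.2) = qdl (lam u p.1) p.2 by exact: lam_dl (e, e').
elim/(enveloping_ind HL HU): u p => [||y u IH].
- apply: subspace_eq => p; first exact: lact_linl.
  exact: lin_comp (bilinl qdl_lin _) (lact_linl Hlam _).
- by move=> p; rewrite !lact1.
- move=> [e1 e2] /=; rewrite !lactM // (IH (e1, e2)) /= !lam_jp.
  by case: HQd => _ [_ /(_ (dot y) (lam u e1) e2) [_ _ -> _ _]].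
Qed.

Lemma chi_l u m : chi (l u m) = lam u (chi m).
Proof.
apply: (tensor2_ext HM (lin_comp chi_lin (l_lin u)) (lin_comp (lact_lin Hlam u) chi_lin)).
by move=> w x; rewrite l_t !chi_t lactM.
Qed.

Lemma chi_r m u : chi (r m u) = rq (chi m) u.
Proof.
elim/(enveloping_ind HL HU): u m => [||y u IH].
- apply: subspace_eq => m; first exact: lin_comp chi_lin (r_linr m).
  exact: ract_linr.
- by move=> m; rewrite r1 ract1.
move=> m; rewrite rM ractM // IH rq_jp; congr rq; move: m.
apply: (tensor2_ext HM (lin_comp chi_lin (r_lin _))).
  exact: lin_comp (bilinl qdl_lin _) chi_lin.
move=> w x; rewrite r_t (linD chi_lin) !chi_t lactM // lam_jp.
by rewrite -(linD (lact_lin Hlam w)) dot_br subrK lam_qdl.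
Qed.

Lemma q_left u u' v w : q (t3 (u * u') v w) = lam (bar u) (q (t3 u' v w)).
Proof.
suff left (p : T * g * T) :
  q (t3 (u * p.1.1) p.1.2 p.2) = lam (bar u) (q (t3 p.1.1 p.1.2 p.2)) by exact: left (u', v, w).
clear u' v w; elim/(tensor_alg_ind HT): u p => [||y u IH].
- apply: subspace_eq => p; last exact: lin_comp (lact_linl Hlam _) bar_lin.
  exact: lin_comp q_lin (lin_comp (t3_linl _ _) (lin_mulr _)).
- by move=> p; rewrite mul1r bar1 lact1.
- move=> [[u' v] w] /=; rewrite -mulrA barM bar_tau lactM // -(IH (u', v, w)) lam_jp.
  by rewrite /dot -q_dr fdr_t3 mul1r mulr1.
Qed.

Lemma q_right w w' u v : q (t3 u v (w' * w)) = rq (q (t3 u v w')) (bar w).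
Proof.
suff right (p : T * g * T) :
  q (t3 p.1.1 p.1.2 (p.2 * w)) = rq (q (t3 p.1.1 p.1.2 p.2)) (bar w) by exact: right (u, v, w').
clear w' u v; elim/(tensor_alg_ind HT): w p => [||y w IH].
- apply: subspace_eq => p; last exact: lin_comp (ract_linr Hrq _) bar_lin.
  exact: lin_comp q_lin (lin_comp (t3_linr _ _) (lin_mull _)).
- by move=> p; rewrite mulr1 bar1 ract1.
- move=> [[u v] w'] /=; rewrite mulrA (IH (u, v, w' * tau y)) barM bar_tau ractM // rq_jp.
  by rewrite /dot -q_dl fdl_t3 !mulr1.
Qed.

Lemma chi_psi X : chi (psi X) = q X.
Proof.
apply: (tensor3_ext HF (lin_comp chi_lin psi_lin) q_lin) => u v w.
rewrite psi_t3 chi_l chi_r chi_t lact1 //.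
by rewrite -[u]mulr1 q_left -[w]mul1r q_right mulr1 mul1r.
Qed.

Lemma chi_phi e : chi (phi e) = e.
Proof. by have [X <-] := q_surj e; rewrite phi_q chi_psi. Qed.

Lemma phi_iso :
  [/\ dialg_hom qdl qdr (fun m m' => r m (f m')) (fun m m' => l (f m) m') phi,
      bijective phi & forall w x, phi (q (t3 w x 1)) = t (bar w) x].
Proof.
split; first by split; [exact: phi_lin | split; [exact: phi_dl | exact: phi_dr]].
  by exists chi; [exact: chi_phi | exact: phi_chi].
by move=> w x; rewrite phi_q psi_t3 bar1 r1 l_t mulr1.
Qed.

End Inverse.

Lemma Ud_iso : exists phi : Q -> M,
  [/\ dialg_hom qdl qdr (fun m m' => r m (f m')) (fun m m' => l (f m) m') phi,
      bijective phi & forall w x, phi (q (t3 w x 1)) = t (bar w) x].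
Proof.
have [psi [psi_lin psi_t3]] : exists psi : F -> M,
    lin psi /\ forall u v w, psi (t3 u v w) = l (bar u) (r (t 1 v) (bar w)).
  apply: (tensor3_lift HF); split; [|split] => [v w|u w|u v].
  - exact: lin_comp (l_linl _) bar_lin.
  - exact: lin_comp (l_lin _) (lin_comp (r_lin _) (bilinr (proj1 HM) 1)).
  - exact: lin_comp (l_lin _) (lin_comp (r_linr _) bar_lin).
have [phi [phi_lin phi_q]] := lin_factor q_lin q_surj psi_lin (psi_ker psi_lin psi_t3).
have [lam [Hlam lam_jp]] := exists_left_action HL HU (act := fun y e => qdr (dot y) e)
  (fun y => bilinr qdr_lin (dot y)) (fun e => lin_comp (bilinl qdr_lin e) dot_lin) qdr_dot_br.
have [rq [Hrq rq_jp]] := exists_right_action HL HU (act := fun y e => qdl e (dot y))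
  (fun y => bilinl qdl_lin (dot y)) (fun e => lin_comp (bilinr qdl_lin e) dot_lin) qdl_dot_br.
have [chi [chi_lin chi_t]] := tensor2_lift HM (b := fun w x => lam w (dot x))
  (conj (fun x => lact_linl Hlam (dot x)) (fun w => lin_comp (lact_lin Hlam w) dot_lin)).
exists phi; exact: (phi_iso psi_lin psi_t3 phi_lin phi_q Hlam lam_jp Hrq rq_jp chi_lin chi_t).
Qed.

End UdIsomorphism.

Theorem proposition4p9 (K : fieldType)
  (g : lmodType K) (br : g -> g -> g) (Hg : leibniz_algebra br)
  (L : lmodType K) (brL : L -> L -> L) (pi : g -> L) (HL : is_Lie_quotient br brL pi)
  (U : algType K) (j : L -> U) (HU : is_UEA brL j)
  (T : algType K) (tau : g -> T) (HT : is_tensor_alg tau)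
  (bar : T -> U) (Hbar : alg_hom bar) (Hbartau : forall x, bar (tau x) = j (pi x))
  (F : lmodType K) (t3 : T -> g -> T -> F) (HF : is_tensor3 t3)
  (fdl fdr : F -> F -> F) (Hfree : free_dialg_products tau t3 fdl fdr)
  (Q : lmodType K) (qdl qdr : Q -> Q -> Q) (q : F -> Q)
  (HQ : is_Ud_quotient br t3 fdl fdr qdl qdr q)
  (M : lmodType K) (t : U -> g -> M) (HM : is_tensor2 t) :
  exists (l : U -> M -> M) (r : M -> U -> M) (f : M -> U),
    [/\ ((forall u w x, l u (t w x) = t (u * w) x) /\
         (forall w x y, r (t w x) (j (pi y)) = t w (br x y) + t (w * j (pi y)) x)),
        bimodule l r,
        bimodule_map l r f /\ (forall w x, f (t w x) = w * j (pi x)),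
        dialgebra (fun m m' => r m (f m')) (fun m m' => l (f m) m') &
        exists phi : Q -> M,
          [/\ dialg_hom qdl qdr (fun m m' => r m (f m')) (fun m m' => l (f m) m') phi,
              bijective phi &
              forall (w : T) (x : g), phi (q (t3 w x 1)) = t (bar w) x]].
Proof.
have [l [r [f [[l_t r_t] Hbim [Hf f_t]]]]] := leibniz_bimodule Hg HL HU HM.
exists l, r, f; split=> //; first exact: bimodule_map_dialgebra.
exact: (Ud_iso HL HU HT Hbar Hbartau HF Hfree HQ HM l_t r_t Hbim Hf f_t).
Qed.
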